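(* Let $d\ge2$, $\tau>0$ and $\varepsilon\in(0,1]$. For any $t\in(0,\tau]$ and $x,x'\in\mathbb{R}$ with $|x-x'|\le h^{-1}(1/t)/4$ and $|x-x'|\le\varepsilon/4$, $$\tilde g^{(\varepsilon)}_t(x')\le\tilde g^{(\varepsilon)}_t(x/2).$$
   Context: Let $\nu$ be a symmetric density of an infinite Lévy measure on $\mathbb{R}$ (with $\int(x^2\wedge1)\nu<\infty$), such that for some $\eta_4>0$, $\nu\in C^1(0,\eta_4)$, $\nu'<0$ and $-\nu'(x)/x$ decreasing on $(0,\eta_4)$. Let $\psi(\xi)=\int(1-\cos(\xi x))\nu(x)dx$ satisfy $\psi(\lambda\theta)\ge\underline{C}\lambda^\alpha\psi(\theta)$ for $\lambda\ge1,\theta\ge0$ and $\psi(\lambda\theta)\le\overline{C}\lambda^\beta\psi(\theta)$ for $\lambda\ge1,\theta\ge1$, with $0<\alpha\le\beta<2$. $h(r)=\int(1\wedge x^2r^{-2})\nu(x)dx$ for $r>0$ (continuous, strictly decreasing from $\infty$ to $0$), $h^{-1}$ its inverse. $\tilde g^{(\varepsilon)}_t(x)=\frac{1}{h^{-1}(1/t)}\wedge\frac{t h(|x|)}{|x|}$ if $|x|<\varepsilon$ (with $h(0)/0=\infty$), and $\tilde g^{(\varepsilon)}_t(x)=c_\varepsilon t^{(d+\beta-1)/\alpha}e^{-|x|}$ if $|x|\ge\varepsilon$, where $c_\varepsilon=\Big(\frac{1}{h^{-1}(1/\tau)}\wedge\frac{\tau h(\varepsilon)}{\varepsilon}\Big)\frac{e^{\varepsilon}}{\tau^{(d+\beta-1)/\alpha}}$.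 *)

From mathcomp Require Import all_boot all_order all_algebra.
From mathcomp Require Import all_classical all_reals all_analysis.
Set Implicit Arguments. Unset Strict Implicit. Unset Printing Implicit Defensive.
Import Order.TTheory GRing.Theory Num.Theory.
Local Open Scope classical_set_scope.
Local Open Scope ring_scope.

Section Defs.
Variable R : realType.

Definition psiL (nu : R -> R) (xi : R) : R :=
  fine (\int[@lebesgue_measure R]_x ((1 - cos (xi * x)) * nu x)%:E)%E.

Definition hL (nu : R -> R) (r : R) : R :=
  fine (\int[@lebesgue_measure R]_x ((Num.min 1 (x ^+ 2 / r ^+ 2)) * nu x)%:E)%E.

(* inverse of the (continuous, strictly decreasing, onto (0,oo)) function h:
   h^{-1}(s) = sup {r > 0 | s <= h r}; for such h this is the unique r with h r = s *)
Definition hinvL (nu : R -> R) (s : R) : R :=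
  sup [set r : R | 0 < r /\ s <= hL nu r].

Definition ceps (nu : R -> R) (d : nat) (alpha beta tau eps : R) : R :=
  Num.min (1 / hinvL nu (1 / tau)) (tau * hL nu eps / eps) * expR eps
  / tau `^ ((d%:R + beta - 1) / alpha).

(* tilde g^{(eps)}_t(x), with the convention h(0)/0 = +oo *)
Definition gtilde (nu : R -> R) (d : nat) (alpha beta tau eps t x : R) : R :=
  if `|x| < eps then
    (if x == 0 then 1 / hinvL nu (1 / t)
     else Num.min (1 / hinvL nu (1 / t)) (t * hL nu `|x| / `|x|))
  else ceps nu d alpha beta tau eps * t `^ ((d%:R + beta - 1) / alpha)
       * expR (- `|x|).

End Defs.

(* Split according to whether x' and x/2 lie in the inner region |y| < eps.  There
   gtilde_t(y) = min(1/h^-1(1/t), t h(|y|)/|y|) is nonincreasing in |y|, because h is,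
   and it equals its cap 1/h^-1(1/t) as soon as |y| < h^-1(1/t).  Outside it is a
   multiple of e^-|y|.  The two bounds on |x - x'| give |x/2| <= |x'| unless |x/2| is
   below h^-1(1/t), and they rule out x' inner with x/2 outer.  If x' is outer and x/2
   inner, c_eps makes the outer branch at most the inner branch at time tau and radius
   eps, and (t/tau)^P <= t/tau since P = (d + beta - 1)/alpha >= 1. *)

From mathcomp Require Import all_boot all_order all_algebra.
From mathcomp Require Import all_classical all_reals all_analysis.
From mathcomp Require Import measurable_realfun ring lra.
Import Order.TTheory GRing.Theory Num.Theory.
Local Open Scope classical_set_scope.
Local Open Scope ring_scope.

Lemma exponent_ge1 (R : realFieldType) (d : nat) (alpha beta : R) :
  (2 <= d)%N -> 0 < alpha <= beta -> 1 <= (d%:R + beta - 1) / alpha.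
Proof.
move=> d_ge2 /andP[alpha_gt0 alpha_le_beta].
have : (2 : R) <= d%:R by rewrite ler_nat.
by rewrite ler_pdivlMr // mul1r; lra.
Qed.

Lemma min1_mul_le (R : realDomainType) (a k : R) : 0 <= a -> 0 <= k ->
  Num.min 1 (a * k) <= (1 + k) * Num.min a 1.
Proof.
move=> a_ge0 k_ge0; have [a_le1|a_ge1] := leP a 1.
  by rewrite ge_min; apply/orP; right; nra.
by rewrite mulr1 ge_min; lra.
Qed.

Section LevyDensity.
Variables (R : realType) (nu : R -> R).
Hypothesis nu_meas : measurable_fun [set: R] nu.
Hypothesis nu_ge0 : forall x, 0 <= nu x.

Let integrand (r x : R) : R := Num.min 1 (x ^+ 2 / r ^+ 2) * nu x.

Lemma measurable_integrand r : measurable_fun [set: R] (fun x => (integrand r x)%:E).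
Proof.
apply: measurableT_comp => //; apply: measurable_funM => //.
by apply: measurable_minr => //; apply: measurable_funM => //; exact: exprn_measurable.
Qed.

Lemma integrand_ge0 r x : 0 <= integrand r x.
Proof. by rewrite mulr_ge0 // le_min ler01 mulr_ge0 ?invr_ge0 ?sqr_ge0. Qed.

Lemma integrand_antitone r1 r2 x : 0 < r1 -> r1 <= r2 ->
  integrand r2 x <= integrand r1 x.
Proof.
move=> r1_gt0 r12; rewrite ler_wpM2r // le_min ge_min lexx /= ge_min.
rewrite ler_wpM2l ?sqr_ge0 ?orbT // lef_pV2 ?posrE ?exprn_gt0 //; last first.
  exact: lt_le_trans r12.
by rewrite lerXn2r ?nnegrE // ltW // (lt_le_trans r1_gt0).
Qed.

Lemma hL_ge0 r : 0 <= hL nu r.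
Proof. by apply/fine_ge0/integral_ge0 => x _; rewrite lee_fin integrand_ge0. Qed.

Hypothesis nu_levy :
  (\int[@lebesgue_measure R]_x ((Num.min (x ^+ 2) 1) * nu x)%:E < +oo)%E.

Lemma integrand_le r x :
  integrand r x <= (1 + (r ^+ 2)^-1) * (Num.min (x ^+ 2) 1 * nu x).
Proof. by rewrite /integrand mulrA ler_wpM2r // min1_mul_le ?invr_ge0 ?sqr_ge0. Qed.

Lemma integral_integrand_fin r :
  (\int[@lebesgue_measure R]_x (integrand r x)%:E)%E \is a fin_num.
Proof.
have mlevy : measurable_fun [set: R] (fun x => (Num.min (x ^+ 2) 1 * nu x)%:E).
  apply: measurableT_comp => //; apply: measurable_funM => //.
  by apply: measurable_minr => //; exact: exprn_measurable.
have c_ge0 : 0 <= 1 + (r ^+ 2)^-1 by rewrite addr_ge0 // invr_ge0 sqr_ge0.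
rewrite ge0_fin_numE; last by apply: integral_ge0 => x _; rewrite lee_fin integrand_ge0.
apply: (@le_lt_trans _ _ ((1 + (r ^+ 2)^-1)%:E *
   \int[@lebesgue_measure R]_x ((Num.min (x ^+ 2) 1) * nu x)%:E)%E).
  rewrite -ge0_integralZl_EFin //; last first.
    by move=> x _; rewrite lee_fin mulr_ge0 // le_min ler01 sqr_ge0.
  apply: ge0_le_integral => //.
  - by move=> x _; rewrite lee_fin integrand_ge0.
  - exact: measurable_integrand.
  - exact: measurable_funeM.
  - by move=> x _; rewrite -EFinM lee_fin integrand_le.
by rewrite lte_mul_pinfty // lee_fin.
Qed.

Lemma hL_nonincreasing r1 r2 : 0 < r1 -> r1 <= r2 -> hL nu r2 <= hL nu r1.
Proof.
move=> r1_gt0 r12; apply: fine_le; rewrite ?integral_integrand_fin //.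
apply: ge0_le_integral => //; try exact: measurable_integrand.
- by move=> x _; rewrite lee_fin integrand_ge0.
- by move=> x _; rewrite lee_fin integrand_antitone.
Qed.

Lemma hL_div_nonincreasing r1 r2 : 0 < r1 -> r1 <= r2 ->
  hL nu r2 / r2 <= hL nu r1 / r1.
Proof.
move=> r1_gt0 r12; have r2_gt0 := lt_le_trans r1_gt0 r12.
apply: ler_pM; rewrite ?hL_ge0 ?invr_ge0 ?(ltW r2_gt0) ?hL_nonincreasing //.
by rewrite lef_pV2 ?posrE.
Qed.

Hypothesis nu_inf : (\int[@lebesgue_measure R]_x (nu x)%:E = +oo)%E.

Lemma integrand_eventually_eq x : x != 0 ->
  \forall n \near \oo, integrand n.+1%:R^-1 x = nu x.
Proof.
move=> x_neq0; have x_gt0 : 0 < `|x| by rewrite normr_gt0.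
exists (Num.truncn `|x|^-1) => // n /= n_ge.
have nx_ge1 : 1 <= `|x| * n.+1%:R.
  by rewrite -ler_pdivrMl // mulr1 ltW // -truncn_le_nat.
rewrite /integrand exprVn invrK -real_normK ?num_real //.
by rewrite (min_l _) ?mul1r //; nra.
Qed.

Lemma hL_unbounded M : exists2 r, 0 < r & M <= hL nu r.
Proof.
pose g n x := (integrand n.+1%:R^-1 x)%:E.
pose D := [set: R] `\ 0.
have mD : measurable D by exact: measurableD.
have mg n : measurable_fun D (g n) by exact: measurable_funS (measurable_integrand _).
have g_ge0 n x : D x -> (0 <= g n x)%E by rewrite lee_fin integrand_ge0.
have g_nd x : D x -> nondecreasing_seq (g^~ x).
  move=> _ m n mn; rewrite lee_fin integrand_antitone ?invr_gt0 //.
  by rewrite lef_pV2 ?posrE // ler_nat.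
(* Monotone convergence: as r = 1/(n+1) decreases, the integrand increases to nu off 0. *)
have := @cvg_monotone_convergence _ _ _ lebesgue_measure _ mD _ mg g_ge0 g_nd.
have -> : (\int[lebesgue_measure]_(x in D) limn (g^~ x) = +oo)%E.
  rewrite -nu_inf -(integral_setD1 (f := fun x => (nu x)%:E) (r := 0)) //; last first.
    by apply: measurable_funS (measurableT_comp _ nu_meas).
  apply: eq_integral => x; rewrite inE => -[_ /eqP x_neq0].
  apply/cvg_lim => //; apply: cvg_near_cst.
  near=> n; rewrite /g; congr (_%:E); near: n; exact: integrand_eventually_eq.
move=> /cvgeyPge /(_ M) [N _ /(_ N (leqnn N))] gN.
exists N.+1%:R^-1; first by rewrite invr_gt0.
rewrite -lee_fin /hL fineK ?integral_integrand_fin //.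
apply: (le_trans gN); apply: ge0_subset_integral => //.
- exact: measurable_integrand.
- by move=> x _; rewrite lee_fin integrand_ge0.
Unshelve. all: by end_near.
Qed.

Lemma hinvL_ge0 s : 0 <= hinvL nu s.
Proof.
rewrite /hinvL.
have [supS|/sup_out->//] := pselect (has_sup [set r | 0 < r /\ s <= hL nu r]).
have [[r Sr] _] := supS.
by apply: le_trans (ltW Sr.1) _; exact: sup_upper_bound.
Qed.

Lemma le_hL_of_lt_hinvL s r : 0 < r -> r < hinvL nu s -> s <= hL nu r.
Proof.
move=> r_gt0 r_lt; set S := [set r | 0 < r /\ s <= hL nu r].
have [S0|S0] := pselect (S !=set0); last first.
  have S_eq0 : S = set0 by apply/eqP/negPn/negP => /set0P.
  by move: r_lt; rewrite /hinvL -/S S_eq0 sup0 => /(lt_trans r_gt0); rewrite ltxx.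
have [y [y_gt0 sy] ry] := sup_gt S0 r_lt.
by apply: le_trans sy _; apply: hL_nonincreasing => //; exact: ltW.
Qed.

Lemma hinvL_inv_le s1 s2 : s1 <= s2 -> 1 / hinvL nu s1 <= 1 / hinvL nu s2.
Proof.
move=> s12; rewrite /hinvL.
set S1 := [set r | 0 < r /\ s1 <= hL nu r]; set S2 := [set r | 0 < r /\ s2 <= hL nu r].
have S21 : S2 `<=` S1 by move=> y [y_gt0 hy]; split => //; exact: le_trans hy.
have [r r_gt0 hr] := hL_unbounded s2.
have S2r : S2 r by [].
(* An unbounded set has sup 0 and 1 / 0 = 0. *)
have [supS1|/sup_out->] := pselect (has_sup S1); last first.
  by rewrite invr0 mulr0 mulr_ge0 // invr_ge0 hinvL_ge0.
have supS2 : has_sup S2.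
  by split; [exists r | case: supS1 => _ [b hb]; exists b => y /S21 /hb].
have sup2_gt0 : 0 < sup S2.
  by apply: lt_le_trans r_gt0 _; exact: sup_upper_bound.
have sup21 : sup S2 <= sup S1.
  by apply: ge_sup; [exists r | move=> y /S21; exact: sup_upper_bound].
by rewrite !div1r lef_pV2 ?posrE // (lt_le_trans sup2_gt0 sup21).
Qed.

Lemma hinvL_inv_le_div t r : 0 < t -> 0 < r -> r < hinvL nu (1 / t) ->
  1 / hinvL nu (1 / t) <= t * hL nu r / r.
Proof.
move=> t_gt0 r_gt0 r_lt.
have th : 1 <= t * hL nu r by rewrite -ler_pdivrMl // mulr1 -div1r le_hL_of_lt_hinvL.
apply: (@le_trans _ _ (1 / r)); last by rewrite ler_wpM2r // invr_ge0 ltW.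
have H_gt0 := lt_trans r_gt0 r_lt.
by rewrite [1 / hinvL _ _]div1r [1 / r]div1r lef_pV2 ?posrE // ltW.
Qed.

Variables (d : nat) (alpha beta tau eps t : R).
Hypotheses (t_gt0 : 0 < t) (t_le_tau : t <= tau) (eps_gt0 : 0 < eps).

Let g := gtilde nu d alpha beta tau eps t.
Let cap := 1 / hinvL nu (1 / t).

Lemma gtilde_inner_le_cap y : `|y| < eps -> g y <= cap.
Proof. by move=> y_in; rewrite /g /gtilde y_in; case: eqP; rewrite ?ge_min lexx. Qed.

Lemma gtilde0 : g 0 = cap.
Proof. by rewrite /g /gtilde normr0 eps_gt0 eqxx. Qed.

Lemma gtilde_eq_cap y : `|y| < eps -> `|y| < hinvL nu (1 / t) -> g y = cap.
Proof.
move=> y_in y_lt; rewrite /g /gtilde y_in; case: eqP => // /eqP y_neq0.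
by apply/min_idPl; apply: hinvL_inv_le_div; rewrite ?normr_gt0.
Qed.

Lemma gtilde_inner_antitone y z : `|y| <= `|z| -> `|z| < eps -> g z <= g y.
Proof.
move=> yz z_in; have [->|y_neq0] := eqVneq y 0.
  by rewrite gtilde0 gtilde_inner_le_cap.
rewrite /g /gtilde z_in (le_lt_trans yz z_in) (negbTE y_neq0).
have y_gt0 : 0 < `|y| by rewrite normr_gt0.
have z_neq0 : z != 0 by rewrite -normr_gt0 (lt_le_trans y_gt0 yz).
rewrite (negbTE z_neq0) le_min !ge_min lexx /=.
by rewrite -!mulrA ler_wpM2l ?(ltW t_gt0) ?hL_div_nonincreasing ?orbT.
Qed.

Let P := (d%:R + beta - 1) / alpha.
Let tau_gt0 : 0 < tau := lt_le_trans t_gt0 t_le_tau.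

(* The inner branch of gtilde at time tau and radius eps: c_eps is calibrated so that
   the outer branch at time tau equals it at radius eps. *)
Let edge := Num.min (1 / hinvL nu (1 / tau)) (tau * hL nu eps / eps).

Let edge_ge0 : 0 <= edge.
Proof.
rewrite le_min div1r invr_ge0 hinvL_ge0 /=.
by rewrite mulr_ge0 ?invr_ge0 ?(ltW eps_gt0) // mulr_ge0 ?hL_ge0 ?(ltW tau_gt0).
Qed.

Lemma gtilde_outer_le z : 1 <= P -> eps <= `|z| -> g z <= edge * (t / tau).
Proof.
move=> P_ge1 z_out; rewrite /g /gtilde ltNge z_out /= -/P.
have t_tau : 0 < t / tau <= 1 by rewrite divr_gt0 //= ler_pdivrMr // mul1r.
have -> : ceps nu d alpha beta tau eps * t `^ P * expR (- `|z|)
        = edge * ((t / tau) `^ P * expR (eps - `|z|)).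
  have tP : t `^ P = (t / tau) `^ P * tau `^ P.
    by rewrite -powRM ?divr_ge0 ?ltW // divfK ?gt_eqF.
  rewrite /ceps -/P -/edge expRD tP; field.
  by rewrite gt_eqF ?powR_gt0.
rewrite ler_wpM2l // -[leRHS]mulr1 ler_pM ?powR_ge0 ?expR_ge0 ?ge1r_powR //.
by rewrite expR_le1 subr_le0.
Qed.

Lemma gtilde_outer_le_inner y z : 1 <= P -> y != 0 -> `|y| < eps -> eps <= `|z| ->
  g z <= g y.
Proof.
move=> P_ge1 y_neq0 y_in z_out; apply: le_trans (gtilde_outer_le z P_ge1 z_out) _.
rewrite /g /gtilde y_in (negbTE y_neq0) le_min; apply/andP; split.
  apply: (@le_trans _ _ edge).
    by rewrite ler_piMr // ler_pdivrMr // mul1r.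
  rewrite ge_min hinvL_inv_le //.
  by rewrite !div1r lef_pV2 ?posrE.
have scale : tau * hL nu eps / eps * (t / tau) = t * hL nu eps / eps.
  by field; rewrite !gt_eqF.
apply: (@le_trans _ _ (t * hL nu eps / eps)).
  by rewrite -scale ler_wpM2r ?divr_ge0 ?(ltW t_gt0) ?(ltW tau_gt0) // ge_min lexx orbT.
have y_gt0 : 0 < `|y| by rewrite normr_gt0.
by rewrite -!mulrA ler_wpM2l ?(ltW t_gt0) ?hL_div_nonincreasing ?ltW.
Qed.

Lemma gtilde_outer_antitone y z : eps <= `|y| <= `|z| -> g z <= g y.
Proof.
case/andP=> y_out yz; rewrite /g /gtilde !ltNge y_out (le_trans y_out yz) /=.
rewrite ler_wpM2l ?ler_expR ?lerN2 // mulr_ge0 ?powR_ge0 //.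
by rewrite /ceps mulr_ge0 ?invr_ge0 ?powR_ge0 // mulr_ge0 ?expR_ge0.
Qed.

End LevyDensity.

Theorem lemma2p9 (R : realType) (nu : R -> R) (alpha beta Cl Cu eta4 : R)
  (d : nat) (tau eps : R)
  (* nu is a symmetric Levy density of an infinite Levy measure *)
  (nu_meas : measurable_fun [set: R] nu)
  (nu_ge0 : forall x, 0 <= nu x)
  (nu_sym : forall x, nu (- x) = nu x)
  (nu_levy : (\int[@lebesgue_measure R]_x ((Num.min (x ^+ 2) 1) * nu x)%:E < +oo)%E)
  (nu_inf : (\int[@lebesgue_measure R]_x (nu x)%:E = +oo)%E)
  (* regularity near 0 *)
  (eta4_gt0 : 0 < eta4)
  (nu_der : forall x, 0 < x < eta4 -> derivable nu x 1)
  (nu_C1 : {within `]0, eta4[, continuous (derive1 nu)})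
  (nu'_lt0 : forall x, 0 < x < eta4 -> derive1 nu x < 0)
  (nu'_dec : forall x y, 0 < x -> x <= y -> y < eta4 ->
              - derive1 nu y / y <= - derive1 nu x / x)
  (* weak scaling of psi *)
  (alpha_gt0 : 0 < alpha) (alpha_le_beta : alpha <= beta) (beta_lt2 : beta < 2)
  (Cl_gt0 : 0 < Cl) (Cu_gt0 : 0 < Cu)
  (psi_low : forall lam th, 1 <= lam -> 0 <= th ->
      Cl * lam `^ alpha * psiL nu th <= psiL nu (lam * th))
  (psi_up : forall lam th, 1 <= lam -> 1 <= th ->
      psiL nu (lam * th) <= Cu * lam `^ beta * psiL nu th)
  (* the lemma *)
  (d_ge2 : (2 <= d)%N) (tau_gt0 : 0 < tau) (eps_gt0 : 0 < eps) (eps_le1 : eps <= 1) :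
  forall t x x' : R, 0 < t -> t <= tau ->
    `|x - x'| <= hinvL nu (1 / t) / 4 -> `|x - x'| <= eps / 4 ->
    gtilde nu d alpha beta tau eps t x' <= gtilde nu d alpha beta tau eps t (x / 2).
Proof.
move=> t x x' t_gt0 t_le_tau near_H near_eps.
have dist_x := lerB_dist x x'.
have dist_x' : `|x'| - `|x| <= `|x - x'| by rewrite distrC lerB_dist.
have half : `|x / 2| = `|x| / 2 by rewrite normrM normfV (@ger0_norm _ 2).
have H_ge0 : 0 <= hinvL nu (1 / t) by exact: hinvL_ge0.
have P_ge1 : 1 <= (d%:R + beta - 1) / alpha.
  by apply: exponent_ge1 => //; rewrite alpha_gt0 alpha_le_beta.
have [x'_in|x'_out] := ltP `|x'| eps; have [x_in|x_out] := ltP `|x / 2| eps.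
- have [x_lt_H|x_ge_H] := ltP `|x / 2| (hinvL nu (1 / t)).
    by rewrite [leRHS]gtilde_eq_cap // gtilde_inner_le_cap.
  by apply: gtilde_inner_antitone => //; lra.
- lra.
- apply: gtilde_outer_le_inner => //; last by rewrite -normr_gt0; lra.
- by apply: gtilde_outer_antitone => //; apply/andP; split; lra.
Qed.
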